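(* Let $(A, b, c)$ be a rational $k$-level LP instance such that for all $l = 1,\ldots,k-1$ and $i = 1,\ldots,k$, $A_{li} = \begin{pmatrix} A'_{li} \\ A''_{li}\end{pmatrix}$, $b_l = \begin{pmatrix} b'_l \\ b''_l\end{pmatrix}$, with $A'_{li} = 0$ for all $l = 1,\ldots,k-1$, $i = l+1,\ldots,k$. Define a $k$-level LP instance $(\hat{A}, \hat{b}, \hat{c})$ by $\hat{A}_{li} = A''_{li}$, $\hat{b}_l = b''_l$ for all $l = 1,\ldots,k-1$, $i = 1,\ldots,k$, $\hat{c} = c$, and $$\begin{pmatrix}\hat{A}_{k1} & \hat{A}_{k2} & \cdots & \hat{A}_{kk}\end{pmatrix} = \begin{pmatrix} A'_{11} & & & \\ \vdots & \ddots & & \\ A'_{k-1\,1} & & A'_{k-1\,k-1} & \\ A_{k1} & \cdots & A_{k\,k-1} & A_{kk}\end{pmatrix},\qquad \hat{b}_k = \begin{pmatrix} b'_1 \\ \vdots \\ b'_{k-1} \\ b_k\end{pmatrix}.$$ Then the instances $(\hat{A}, \hat{b}, \hat{c})$ and $(A,b,c)$ have the same feasible set and the same optimal objective value.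
   Context: A $k$-level LP instance $(A,b,c)$ has data $A_{li} \in \mathbb{Q}^{m_l \times n_i}$, $b_l \in \mathbb{Q}^{m_l}$, $c_{li} \in \mathbb{Q}^{n_i}$. Player $l$ chooses $x_l \in \mathbb{R}^{n_l}$ after players $1,\ldots,l-1$. The $l$-th player's problem, given $x_1,\ldots,x_{l-1}$, is $\inf_{x_l,\ldots,x_k}\{\sum_{i=l}^k c_{li}^\top x_i : \sum_{i=1}^k A_{li}x_i \ge b_l,\ (x_{l+1},\ldots,x_k) \in \mathcal{S}(\text{problem of player } l+1 \text{ given } x_1,\ldots,x_l)\}$, and the $k$-th player's problem is $\inf_{x_k}\{c_{kk}^\top x_k : \sum_{i=1}^k A_{ki}x_i \ge b_k\}$. The instance is identified with the first player's problem; its feasible set and optimal value are those of the first player's problem. $\mathcal{S}(\cdot)$ denotes the optimal solution set (optimistic setting). *)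

From HB Require Import structures.
From mathcomp Require Import all_boot all_order all_algebra.
From mathcomp Require Import classical_sets reals constructive_ereal ereal.
Set Implicit Arguments. Unset Strict Implicit. Unset Printing Implicit Defensive.
Import Order.TTheory GRing.Theory Num.Theory.
Local Open Scope ring_scope.

(* 'I_k (0-based: player l+1 of the paper is level l here).  n i is    *)
Record mlp (k : nat) (n : 'I_k -> nat) := MLP {
  mm : 'I_k -> nat;
  mA : forall l i : 'I_k, 'M[rat]_(mm l, n i);
  mb : forall l : 'I_k, 'cV[rat]_(mm l);
  mc : forall l i : 'I_k, 'cV[rat]_(n i) }.

Section Semantics.
Variable R : realType.
Variables (k : nat) (n : 'I_k -> nat).

Definition point := forall i : 'I_k, 'cV[R]_(n i).

Definition constr (P : mlp n) (l : 'I_k) (x : point) : Prop :=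
  forall r : 'I_(mm P l),
    (map_mx ratr (mb P l)) r 0 <= (\sum_i map_mx ratr (mA P l i) *m x i) r 0.

Definition obj (P : mlp n) (l : 'I_k) (x : point) : R :=
  \sum_(i : 'I_k | (l <= i)%N) ((map_mx ratr (mc P l i))^T *m x i) 0 0.

(* the same, with the level given as a natural number (junk outside 'I_k) *)
Definition constrN (P : mlp n) (l : nat) (x : point) : Prop :=
  if (insub l : option 'I_k) is Some l' then constr P l' x else True.
Definition objN (P : mlp n) (l : nat) (x : point) : R :=
  if (insub l : option 'I_k) is Some l' then obj P l' x else 0.

Definition agree (l : nat) (x y : point) : Prop :=
  forall i : 'I_k, (i < l)%N -> x i = y i.

(* feasN P d l x : x (its components l..k-1, the others being the
   parameters fixed by the upper levels) is feasible for the problem of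
   player l, where d is the number of players below l.  The lower-level
   condition (x_{l+1},...,x_k) in S(problem of player l+1 given x_{<=l})
   is unfolded: it is feasible for that problem and optimal among all
   feasible y with the same x_1..x_l (optimistic setting). *)
Fixpoint feasN (P : mlp n) (d l : nat) (x : point) : Prop :=
  constrN P l x /\
  match d with
  | 0 => True
  | d'.+1 => feasN P d' l.+1 x /\
             (forall y : point, agree l.+1 x y -> feasN P d' l.+1 y ->
                objN P l.+1 x <= objN P l.+1 y)
  end.

(* feasible set and optimal value of the instance (= of player 1's problem);
   the optimal value is an infimum in the extended reals (+oo if infeasible) *)
Definition feasible_set (P : mlp n) : set point := [set x | feasN P k.-1 0 x].
Definition opt_value (P : mlp n) : \bar R :=
  ereal_inf [set (objN P 0 x)%:E | x in feasible_set P].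
End Semantics.

(* For levels l < k-1 the blocks A_{li} = (A'_{li}; A''_{li}),         *)
(* b_l = (b'_l; b''_l) are given through A1 = A', A2 = A'', b1 = b',   *)
(* b2 = b''.  Ak i = A_{ki}, bk = b_k for the last level.  The values  *)
(* of A1, A2, b1, b2 at the last level l = k-1 are never used.         *)
Section Instances.
Variables (k : nat) (n : 'I_k -> nat) (m1 m2 : 'I_k -> nat) (mk : nat)
  (A1 : forall l i : 'I_k, 'M[rat]_(m1 l, n i))
  (A2 : forall l i : 'I_k, 'M[rat]_(m2 l, n i))
  (b1 : forall l : 'I_k, 'cV[rat]_(m1 l))
  (b2 : forall l : 'I_k, 'cV[rat]_(m2 l))
  (Ak : forall i : 'I_k, 'M[rat]_(mk, n i)) (bk : 'cV[rat]_mk)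
  (c : forall l i : 'I_k, 'cV[rat]_(n i)).

Definition orig_m (l : 'I_k) : nat :=
  if (l < k.-1)%N then (m1 l + m2 l)%N else mk.
Definition orig_A (l i : 'I_k) : 'M[rat]_(orig_m l, n i) :=
  if (l < k.-1)%N as bb return 'M[rat]_(if bb then (m1 l + m2 l)%N else mk, n i)
  then col_mx (A1 l i) (A2 l i) else Ak i.
Definition orig_b (l : 'I_k) : 'cV[rat]_(orig_m l) :=
  if (l < k.-1)%N as bb return 'cV[rat]_(if bb then (m1 l + m2 l)%N else mk)
  then col_mx (b1 l) (b2 l) else bk.
Definition orig_inst : mlp n := @MLP k n orig_m orig_A orig_b c.

(* the levels 1..k-1 of the paper, as elements of 'I_k *)
Definition lw (j : 'I_k.-1) : 'I_k := widen_ord (leq_pred k) j.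

Definition hat_m (l : 'I_k) : nat :=
  if (l < k.-1)%N then m2 l else ((\sum_(j < k.-1) m1 (lw j)) + mk)%N.
Definition hat_A (l i : 'I_k) : 'M[rat]_(hat_m l, n i) :=
  if (l < k.-1)%N as bb
    return 'M[rat]_(if bb then m2 l else ((\sum_(j < k.-1) m1 (lw j)) + mk)%N, n i)
  then A2 l i
  else col_mx (\mxcol_(j < k.-1) A1 (lw j) i) (Ak i).
Definition hat_b (l : 'I_k) : 'cV[rat]_(hat_m l) :=
  if (l < k.-1)%N as bb
    return 'cV[rat]_(if bb then m2 l else ((\sum_(j < k.-1) m1 (lw j)) + mk)%N)
  then b2 l
  else col_mx (\mxcol_(j < k.-1) b1 (lw j)) bk.
Definition hat_inst : mlp n := @MLP k n hat_m hat_A hat_b c.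
End Instances.

Arguments feasible_set R {k n} P.
Arguments opt_value R {k n} P.

From Pilot Require Import Defs.
From HB Require Import structures.
From mathcomp Require Import all_boot all_order all_algebra.
From mathcomp Require Import classical_sets reals constructive_ereal ereal.
Set Implicit Arguments. Unset Strict Implicit. Unset Printing Implicit Defensive.
Import Order.TTheory GRing.Theory Num.Theory.
Local Open Scope ring_scope.

(* The primed rows A'_l x >= b'_l of a level l < k involve only x_1, ..., x_l,
   which are parameters for every player below l.  So moving them to the last
   level changes nothing for player l, provided the primed rows of the levels
   above l are kept as a side condition.  By downward induction on l: x is
   feasible for player l of the transformed instance iff it is feasible for
   player l of the original one and satisfies the primed rows of all levels
   j < l (levels are 0-based).  For l = 0 the side condition is empty. *)

Section ComponentwiseOrder.
Variable R : numDomainType.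

Definition cv_le m (u v : 'cV[R]_m) : Prop := forall r, u r 0 <= v r 0.

Lemma cv_le_col_mx m1 m2 (u1 v1 : 'cV[R]_m1) (u2 v2 : 'cV[R]_m2) :
  cv_le (col_mx u1 u2) (col_mx v1 v2) <-> cv_le u1 v1 /\ cv_le u2 v2.
Proof.
split=> [uv | [uv1 uv2] r].
  by split=> r; [have := uv (lshift m2 r) | have := uv (rshift m1 r)];
    rewrite ?col_mxEu ?col_mxEd.
by case: (split_ordP r) => j ->; rewrite ?col_mxEu ?col_mxEd.
Qed.

Lemma cv_le_mxcol p (p_ : 'I_p -> nat) (u v : forall j, 'cV[R]_(p_ j)) :
  cv_le (\mxcol_j u j) (\mxcol_j v j) <-> forall j, cv_le (u j) (v j).
Proof.
have mxcolE (w : forall j, 'cV[R]_(p_ j)) j r :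
    (\mxcol_j w j) (tagnat.Rank j r) 0 = w j r 0.
  by have := congr1 (fun M : 'cV_(p_ j) => M r 0) (mxcolK w j); rewrite mxE.
split=> [uv j r | uv s]; first by have := uv (tagnat.Rank j r); rewrite !mxcolE.
by rewrite -(tagnat.sig2K s) !mxcolE; apply: uv.
Qed.

End ComponentwiseOrder.

Lemma map_mxcol (aT rT : Type) (f : aT -> rT) p (p_ : 'I_p -> nat) m
    (B : forall j, 'M[aT]_(p_ j, m)) :
  map_mx f (\mxcol_j B j) = \mxcol_j map_mx f (B j).
Proof. by apply/matrixP => s t; rewrite !mxE. Qed.

Section LinearSystems.
Variable R : realType.
Variables (k : nat) (n : 'I_k -> nat).
Local Notation point := (Defs.point R n).

Definition blockmul m (B : forall i, 'M[rat]_(m, n i)) (x : point) : 'cV[R]_m :=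
  \sum_i map_mx ratr (B i) *m x i.

Definition lin_ge m (B : forall i, 'M[rat]_(m, n i)) (b : 'cV[rat]_m) (x : point) :=
  cv_le (map_mx ratr b) (blockmul B x).

Lemma constrE (P : mlp n) l (x : point) : constr P l x = lin_ge (mA P l) (mb P l) x.
Proof. by []. Qed.

Lemma constrN_ord (P : mlp n) l (lk : (l < k)%N) (x : point) :
  constrN P l x = constr P (Ordinal lk) x.
Proof. by rewrite /constrN insubT. Qed.

Lemma blockmul_col_mx m1 m2 (U : forall i, 'M[rat]_(m1, n i))
    (D : forall i, 'M[rat]_(m2, n i)) x :
  blockmul (fun i => col_mx (U i) (D i)) x = col_mx (blockmul U x) (blockmul D x).
Proof.
apply/matrixP => r t; rewrite summxE.
by case: (split_ordP r) => j ->; rewrite ?col_mxEu ?col_mxEd summxE;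
  apply: eq_bigr => i _; rewrite map_col_mx mul_col_mx ?col_mxEu ?col_mxEd.
Qed.

Lemma blockmul_mxcol p (p_ : 'I_p -> nat) (B : forall j i, 'M[rat]_(p_ j, n i)) x :
  blockmul (fun i => \mxcol_j B j i) x = \mxcol_j blockmul (B j) x.
Proof.
by rewrite /blockmul mxcol_sum; apply: eq_bigr => i _; rewrite map_mxcol mxcol_mul.
Qed.

Lemma blockmul_agree l m (B : forall i, 'M[rat]_(m, n i)) x y :
  (forall i : 'I_k, (l <= i)%N -> B i = 0) -> agree l x y ->
  blockmul B x = blockmul B y.
Proof.
move=> B0 xy; apply: eq_bigr => i _.
by case: (ltnP i l) => [/xy -> // | /B0 ->]; rewrite map_mx0 !mul0mx.
Qed.

Lemma lin_ge_col_mx m1 m2 (U : forall i, 'M[rat]_(m1, n i))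
    (D : forall i, 'M[rat]_(m2, n i)) bu bd x :
  lin_ge (fun i => col_mx (U i) (D i)) (col_mx bu bd) x <->
  lin_ge U bu x /\ lin_ge D bd x.
Proof. by rewrite /lin_ge blockmul_col_mx map_col_mx cv_le_col_mx. Qed.

Lemma lin_ge_mxcol p (p_ : 'I_p -> nat) (B : forall j i, 'M[rat]_(p_ j, n i))
    (b : forall j, 'cV[rat]_(p_ j)) x :
  lin_ge (fun i => \mxcol_j B j i) (\mxcol_j b j) x <-> forall j, lin_ge (B j) (b j) x.
Proof. by rewrite /lin_ge blockmul_mxcol map_mxcol cv_le_mxcol. Qed.

Lemma lin_ge_agree l m (B : forall i, 'M[rat]_(m, n i)) b x y :
  (forall i : 'I_k, (l <= i)%N -> B i = 0) -> agree l x y ->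
  lin_ge B b x -> lin_ge B b y.
Proof. by move=> B0 xy; rewrite /lin_ge (blockmul_agree B0 xy). Qed.

End LinearSystems.

Section MovingPrimedConstraints.
Variable R : realType.
Variables (k : nat) (n m1 m2 : 'I_k -> nat) (mk : nat)
  (A1 : forall l i : 'I_k, 'M[rat]_(m1 l, n i))
  (A2 : forall l i : 'I_k, 'M[rat]_(m2 l, n i))
  (b1 : forall l : 'I_k, 'cV[rat]_(m1 l))
  (b2 : forall l : 'I_k, 'cV[rat]_(m2 l))
  (Ak : forall i : 'I_k, 'M[rat]_(mk, n i)) (bk : 'cV[rat]_mk)
  (c : forall l i : 'I_k, 'cV[rat]_(n i)).
Hypothesis hk : (0 < k)%N.
Hypothesis hA1 : forall l i : 'I_k, (l < k.-1)%N -> (l < i)%N -> A1 l i = 0.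

Local Notation point := (Defs.point R n).
Local Notation orig := (orig_inst A1 A2 b1 b2 Ak bk c).
Local Notation hat := (hat_inst A1 A2 b1 b2 Ak bk c).

Lemma orig_constr_upper (l : 'I_k) (x : point) : (l < k.-1)%N ->
  constr orig l x <-> lin_ge (A1 l) (b1 l) x /\ lin_ge (A2 l) (b2 l) x.
Proof.
rewrite constrE /= /orig_m /orig_A /orig_b.
by case: (l < k.-1)%N => // _; rewrite lin_ge_col_mx.
Qed.

Lemma orig_constr_last (l : 'I_k) (x : point) : l = k.-1 :> nat ->
  constr orig l x <-> lin_ge Ak bk x.
Proof.
move=> lE; have : (l < k.-1)%N = false by rewrite lE ltnn.
by rewrite constrE /= /orig_m /orig_A /orig_b; case: (l < k.-1)%N.
Qed.

Lemma hat_constr_upper (l : 'I_k) (x : point) : (l < k.-1)%N ->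
  constr hat l x <-> lin_ge (A2 l) (b2 l) x.
Proof. by rewrite constrE /= /hat_m /hat_A /hat_b; case: (l < k.-1)%N. Qed.

Lemma hat_constr_last (l : 'I_k) (x : point) : l = k.-1 :> nat ->
  constr hat l x <->
  (forall j : 'I_k.-1, lin_ge (A1 (lw j)) (b1 (lw j)) x) /\ lin_ge Ak bk x.
Proof.
move=> lE; have : (l < k.-1)%N = false by rewrite lE ltnn.
rewrite constrE /= /hat_m /hat_A /hat_b; case: (l < k.-1)%N => // _.
by rewrite lin_ge_col_mx lin_ge_mxcol.
Qed.

Definition primed_upto (l : nat) (x : point) : Prop :=
  forall j : 'I_k, (j < l)%N -> (j < k.-1)%N -> lin_ge (A1 j) (b1 j) x.

Lemma primed_upto_agree l (x y : point) :
  agree l x y -> primed_upto l x -> primed_upto l y.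
Proof.
move=> xy px j jl jk; apply: lin_ge_agree (px j jl jk) => [i|i il].
  exact: hA1.
by apply: xy; apply: leq_trans il jl.
Qed.

Lemma primed_uptoS (l : 'I_k) (x : point) : (l < k.-1)%N ->
  primed_upto l.+1 x <-> primed_upto l x /\ lin_ge (A1 l) (b1 l) x.
Proof.
move=> lk; split=> [px | [px pl] j].
  by split=> [j jl|]; [apply: px; apply: ltnW | apply: px].
by rewrite ltnS leq_eqVlt => /orP[/eqP/val_inj-> | /px].
Qed.

Lemma primed_upto_last (x : point) :
  primed_upto k.-1 x <-> forall j : 'I_k.-1, lin_ge (A1 (lw j)) (b1 (lw j)) x.
Proof.
split=> [px j | px j jk _]; first exact: px (lw j) (ltn_ord j) (ltn_ord j).
by have -> : j = lw (Ordinal jk) by apply: val_inj.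
Qed.

Lemma feasN_hat d : forall l (x : point), (l + d)%N = k.-1 ->
  feasN hat d l x <-> feasN orig d l x /\ primed_upto l x.
Proof.
elim: d => [|d IH] l x; rewrite ?addn0 ?addnS => ldE.
  have lk : (l < k)%N by rewrite ldE prednK.
  rewrite /= !constrN_ord (hat_constr_last (l := Ordinal lk)) //.
  rewrite (orig_constr_last (l := Ordinal lk)) // ldE primed_upto_last.
  by split=> [[[P1 Pk] _] | [[Pk _] P1]].
have lk1 : (l < k.-1)%N by rewrite -ldE ltnS leq_addr.
have lk : (l < k)%N by apply: leq_trans lk1 (leq_pred k).
have {}IH y := IH l.+1 y ldE.
rewrite /= !constrN_ord (hat_constr_upper (l := Ordinal lk)) //.
rewrite (orig_constr_upper (l := Ordinal lk)) // IH.
rewrite (primed_uptoS (l := Ordinal lk)) //.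
split=> [[c2l [[fo [pl c1l]] opt]] | [[[c1l c2l] [fo opt]] pl]].
  split=> //; split=> //; split=> // y xy fy; apply: (opt _ xy).
  rewrite IH; split=> //; apply: (primed_upto_agree xy).
  by apply/(primed_uptoS (l := Ordinal lk)).
split=> //; split=> // y xy /IH[fy _]; exact: opt xy fy.
Qed.

Lemma feasible_set_orig_hat : feasible_set R orig = feasible_set R hat.
Proof.
apply/seteqP; split=> x /=.
  by move=> fx; apply/(feasN_hat (l := 0)); rewrite ?add0n.
by case/(feasN_hat (l := 0)); rewrite ?add0n.
Qed.

End MovingPrimedConstraints.

Theorem lemma3p4 (R : realType) (k : nat) (n m1 m2 : 'I_k -> nat) (mk : nat)
  (A1 : forall l i : 'I_k, 'M[rat]_(m1 l, n i))
  (A2 : forall l i : 'I_k, 'M[rat]_(m2 l, n i))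
  (b1 : forall l : 'I_k, 'cV[rat]_(m1 l))
  (b2 : forall l : 'I_k, 'cV[rat]_(m2 l))
  (Ak : forall i : 'I_k, 'M[rat]_(mk, n i)) (bk : 'cV[rat]_mk)
  (c : forall l i : 'I_k, 'cV[rat]_(n i))
  (hk : (0 < k)%N)
  (hA1 : forall l i : 'I_k, (l < k.-1)%N -> (l < i)%N -> A1 l i = 0) :
  feasible_set R (orig_inst A1 A2 b1 b2 Ak bk c)
    = feasible_set R (hat_inst A1 A2 b1 b2 Ak bk c) /\
  opt_value R (orig_inst A1 A2 b1 b2 Ak bk c)
    = opt_value R (hat_inst A1 A2 b1 b2 Ak bk c).
Proof.
have feasE := feasible_set_orig_hat R A2 b1 b2 Ak bk c hk hA1.
(* both instances carry the same objective c, so objN agrees definitionally *)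
by split; rewrite /opt_value feasE.
Qed.
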